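(* The number of $1$-number-conserving $3$-state $3$-neighbor vector-valued fuzzy cellular automaton rules is $9\times 2^{18}$. More precisely, writing the local rule as $f(\bm{x},\bm{y},\bm{z})=\big(\sum a_{jk\ell}x_jy_kz_\ell,\ \sum b_{jk\ell}x_jy_kz_\ell,\ \sum c_{jk\ell}x_jy_kz_\ell\big)^{\top}$ (sums over $j,k,\ell\in\{1,2,3\}$) with $(a_{jk\ell},b_{jk\ell},c_{jk\ell})^{\top}\in\{\bm{e}_1,\bm{e}_2,\bm{e}_3\}$, the rule is $1$-number-conserving if and only if the vector $(a_{111},a_{112},a_{113},a_{121},\dots,a_{333})$ (indices in lexicographic order) is one of the following nine vectors: (1,1,1,1,1,1,1,1,1,0,0,0,0,0,0,0,0,0,0,0,0,0,0,0,0,0,0), (1,1,1,1,0,0,1,0,0,0,0,0,1,0,0,1,0,0,0,0,0,1,0,0,1,0,0), (1,1,1,1,0,0,0,0,0,0,0,0,1,0,0,0,0,0,1,1,1,1,0,0,0,0,0), (1,1,1,0,0,0,1,0,0,1,1,1,0,0,0,1,0,0,0,0,0,0,0,0,1,0,0), (1,1,1,0,0,0,0,0,0,1,1,1,0,0,0,0,0,0,1,1,1,0,0,0,0,0,0), (1,1,0,0,0,0,1,1,1,1,1,0,0,0,0,0,0,0,1,1,0,0,0,0,0,0,0), (1,0,1,1,1,1,0,0,0,1,0,1,0,0,0,0,0,0,1,0,1,0,0,0,0,0,0), (1,0,0,1,1,1,1,1,1,1,0,0,0,0,0,0,0,0,1,0,0,0,0,0,0,0,0), (1,0,0,1,0,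0,1,0,0,1,0,0,1,0,0,1,0,0,1,0,0,1,0,0,1,0,0).
   Context: Let $\bm{e}_1,\bm{e}_2,\bm{e}_3$ be the standard basis of $\mathbb{R}^3$ and $\Delta=\{(x_1,x_2,x_3)^{\top}\mid x_1+x_2+x_3=1,\ x_i\ge0\}$. A $3$-state $3$-neighbor vector-valued fuzzy cellular automaton ($3$-VFCA) has cells $i\in\mathbb{Z}$ with states $\bm{x}_i^t\in\Delta$ at times $t\in\mathbb{Z}_{\ge0}$, evolving by $\bm{x}_i^{t+1}=f(\bm{x}_{i-1}^t,\bm{x}_i^t,\bm{x}_{i+1}^t)$, where $f$ is of the displayed form (such $f$ correspond bijectively to maps $h:\{\bm{e}_1,\bm{e}_2,\bm{e}_3\}^3\to\{\bm{e}_1,\bm{e}_2,\bm{e}_3\}$ via $(a_{jk\ell},b_{jk\ell},c_{jk\ell})^\top=h(\bm{e}_j,\bm{e}_k,\bm{e}_\ell)$; there are $3^{27}$ rules). Consider $L$-periodic configurations ($\bm{x}_i^t=\bm{x}_{i+L}^t$, $L$ a positive integer) and $\nu^t(1)=\sum_{i=1}^L[\bm{x}_i^t]_1$, where $[\bm{x}]_1$ is the first entry. The rule is $1$-number-conserving if $\nu^{t+1}(1)=\nu^t(1)$ for all $t$ and every periodic initial configuration in $\Delta$ (of every period $L$). *)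

From HB Require Import structures.
From mathcomp Require Import all_boot all_order all_algebra.
From mathcomp Require Import boolp reals.
Set Implicit Arguments. Unset Strict Implicit. Unset Printing Implicit Defensive.
Import Order.TTheory GRing.Theory Num.Theory.
Local Open Scope ring_scope.

(* A rule is a map h : {e1,e2,e3}^3 -> {e1,e2,e3}; basis vector e_(m+1) is
   encoded by m : 'I_3, so h (j,k,l) = m means (a_jkl,b_jkl,c_jkl) = e_(m+1)
   (indices shifted by one: j,k,l : 'I_3 stand for 1,2,3). *)
Definition rule := {ffun 'I_3 * 'I_3 * 'I_3 -> 'I_3}.

Definition state (R : realType) := 'I_3 -> R.

Definition inDelta (R : realType) (x : state R) : Prop :=
  (forall m, 0 <= x m) /\ \sum_(m < 3) x m = 1.

Definition localf (R : realType) (h : rule) (x y z : state R) : state R :=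
  fun m => \sum_(j < 3) \sum_(k < 3) \sum_(l < 3)
             ((h (j, k, l) == m)%:R * x j * y k * z l).

Definition config (R : realType) := int -> state R.

Definition step (R : realType) (h : rule) (c : config R) : config R :=
  fun i => localf h (c (i - 1)) (c i) (c (i + 1)).

Definition periodic (R : realType) (L : nat) (c : config R) : Prop :=
  forall i : int, c (i + L%:Z) = c i.

Definition nu1 (R : realType) (L : nat) (c : config R) : R :=
  \sum_(1 <= i < L.+1) c (i%:Z) ord0.

Definition number_conserving1 (R : realType) (h : rule) : Prop :=
  forall (L : nat), (0 < L)%N -> forall c : config R,
    periodic L c -> (forall i, inDelta (c i)) ->
    forall t : nat, nu1 L (iter t.+1 (step h) c) = nu1 L (iter t (step h) c).

Definition triples : seq ('I_3 * 'I_3 * 'I_3) :=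
  flatten [seq flatten [seq [seq (j, k, l) | l <- enum 'I_3] | k <- enum 'I_3]
          | j <- enum 'I_3].

Definition avec (h : rule) : seq nat :=
  [seq nat_of_bool (h t == ord0) | t <- triples].

Definition conserving_avecs : seq (seq nat) :=
  [:: [:: 1;1;1;1;1;1;1;1;1;0;0;0;0;0;0;0;0;0;0;0;0;0;0;0;0;0;0];
      [:: 1;1;1;1;0;0;1;0;0;0;0;0;1;0;0;1;0;0;0;0;0;1;0;0;1;0;0];
      [:: 1;1;1;1;0;0;0;0;0;0;0;0;1;0;0;0;0;0;1;1;1;1;0;0;0;0;0];
      [:: 1;1;1;0;0;0;1;0;0;1;1;1;0;0;0;1;0;0;0;0;0;0;0;0;1;0;0];
      [:: 1;1;1;0;0;0;0;0;0;1;1;1;0;0;0;0;0;0;1;1;1;0;0;0;0;0;0];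
      [:: 1;1;0;0;0;0;1;1;1;1;1;0;0;0;0;0;0;0;1;1;0;0;0;0;0;0;0];
      [:: 1;0;1;1;1;1;0;0;0;1;0;1;0;0;0;0;0;0;1;0;1;0;0;0;0;0;0];
      [:: 1;0;0;1;1;1;1;1;1;1;0;0;0;0;0;0;0;0;1;0;0;0;0;0;0;0;0];
      [:: 1;0;0;1;0;0;1;0;0;1;0;0;1;0;0;1;0;0;1;0;0;1;0;0;1;0;0]]%N.

From HB Require Import structures.
From mathcomp Require Import all_boot all_order all_algebra.
From mathcomp Require Import boolp reals.
From mathcomp Require Import ring lra zify.
Set Implicit Arguments. Unset Strict Implicit. Unset Printing Implicit Defensive.
Import Order.TTheory GRing.Theory Num.Theory.

(* Write a (x, y, z) for the indicator of h (x, y, z) = e1.  The coordinates of every state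
   of Delta sum to 1, so if a has a flux, a (x, y, z) = [y = e1] + J (x, y) - J (y, z), then
   the multilinear local rule maps the first coordinate of cell i to that of cell i plus
   a difference of consecutive bilinear fluxes, and nu(1) telescopes over a period.
   Conversely, comparing nu(1) before and after one step on the periodic configurations
   (x y z e1 e1)^oo and (x y e1 e1)^oo of basis vectors gives
     a (x, y, z) + a (y, z, e1) + a (z, e1, e1) = a (x, y, e1) + a (y, e1, e1) + [z = e1],
   a flux with J (x, y) = a (x, y, e1) + a (y, e1, e1) - [y = e1].  This identity determines
   a from its 9 values a (x, y, e1), and running through the 2^9 choices leaves exactly the
   nine listed vectors.  Each of them fixes which of the 27 values of h are e1 and has 18
   zeros, leaving 2 choices for each of the other 18 values. *)

Local Notation triple := ('I_3 * 'I_3 * 'I_3)%type.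

(* [enum 'I_3] does not reduce under vm_compute, so the finite checks run over [ords3]. *)
Definition e1 : 'I_3 := ord0.
Definition e2 : 'I_3 := Ordinal (isT : 1 < 3).
Definition e3 : 'I_3 := Ordinal (isT : 2 < 3).
Definition ords3 : seq 'I_3 := [:: e1; e2; e3].

Lemma enum_ord3 : enum 'I_3 = ords3.
Proof. by apply: (inj_map val_inj); rewrite val_enum_ord. Qed.

Lemma mem_ords3 x : x \in ords3.
Proof. by rewrite -enum_ord3 mem_enum. Qed.

Lemma ord3_cases (P : 'I_3 -> Prop) : P e1 -> P e2 -> P e3 -> forall x, P x.
Proof. by move=> P1 P2 P3 x; have := mem_ords3 x; rewrite !inE => /or3P[] /eqP ->. Qed.

Lemma mem_triples t : t \in triples.
Proof.
case: t => [[x y] z]; apply/flattenP.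
exists (flatten [seq [seq (x, k, l) | l <- enum 'I_3] | k <- enum 'I_3]).
  by apply: map_f; rewrite mem_enum.
by apply/flattenP; exists [seq (x, y, l) | l <- enum 'I_3]; apply: map_f; rewrite mem_enum.
Qed.

Definition e1_indicator (h : rule) (t : triple) : bool := h t == e1.

Definition flux_identity (a : triple -> bool) : bool :=
  all (fun x => all (fun y => all (fun z =>
    a (x, y, z) + a (y, z, e1) + a (z, e1, e1) == a (x, y, e1) + a (y, e1, e1) + (z == e1)
  ) ords3) ords3) ords3.

Lemma flux_identityP (a : triple -> bool) :
  reflect (forall x y z,
             a (x, y, z) + a (y, z, e1) + a (z, e1, e1) = a (x, y, e1) + a (y, e1, e1) + (z == e1))
          (flux_identity a).
Proof.
apply: (iffP allP) => [a_id x y z | a_id x _].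
  by have /allP/(_ y (mem_ords3 y))/allP/(_ z (mem_ords3 z))/eqP := a_id x (mem_ords3 x).
by apply/allP => y _; apply/allP => z _; apply/eqP.
Qed.

Section Dynamics.
Variable R : realType.
Local Open Scope ring_scope.

Definition basis (m : 'I_3) : state R := fun n => (m == n)%:R.

Lemma sum_basis m : \sum_(n < 3) basis m n = 1.
Proof. by rewrite (bigD1 m) //= /basis eqxx big1 ?addr0 // => n; rewrite eq_sym => /negbTE ->. Qed.

Lemma basis_inDelta m : inDelta (basis m).
Proof. by split; [move=> n; rewrite ler0n | exact: sum_basis]. Qed.

Lemma sum_ord3 (F : 'I_3 -> R) : \sum_(n < 3) F n = F e1 + F e2 + F e3.
Proof. by rewrite !big_ord_recl big_ord0 addr0 addrA; congr (_ + F _ + F _); apply: val_inj. Qed.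

Lemma sum_mul_basis (F : 'I_3 -> R) m : \sum_(n < 3) F n * basis m n = F m.
Proof.
rewrite (bigD1 m) //= /basis eqxx mulr1 big1 ?addr0 // => n.
by rewrite eq_sym => /negbTE ->; rewrite mulr0.
Qed.

Variable h : rule.

Lemma localf_basis a b c : localf h (basis a) (basis b) (basis c) = basis (h (a, b, c)).
Proof.
apply: funext => m; rewrite /localf.
under eq_bigr do under eq_bigr do rewrite sum_mul_basis.
under eq_bigr do rewrite sum_mul_basis.
by rewrite sum_mul_basis.
Qed.

Lemma sum_localf (x y z : state R) :
  \sum_(m < 3) localf h x y z m = (\sum_(j < 3) x j) * (\sum_(k < 3) y k) * (\sum_(l < 3) z l).
Proof.
transitivity (\sum_(j < 3) \sum_(k < 3) \sum_(l < 3) x j * y k * z l);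
  last by rewrite !sum_ord3; ring.
rewrite exchange_big; apply: eq_bigr => j _; rewrite exchange_big; apply: eq_bigr => k _.
rewrite exchange_big; apply: eq_bigr => l _.
by rewrite -!big_distrl /= (sum_basis (h (j, k, l))) !mul1r.
Qed.

Lemma localf_inDelta (x y z : state R) :
  inDelta x -> inDelta y -> inDelta z -> inDelta (localf h x y z).
Proof.
move=> [x_ge0 sx] [y_ge0 sy] [z_ge0 sz]; split; last by rewrite sum_localf sx sy sz !mulr1.
move=> m; do 3!(apply: sumr_ge0 => ? _).
by rewrite !mulr_ge0.
Qed.

Lemma step_inDelta (c : config R) : (forall i, inDelta (c i)) -> forall i, inDelta (step h c i).
Proof. by move=> c_in i; apply: localf_inDelta. Qed.

Lemma step_periodic L (c : config R) : periodic L c -> periodic L (step h c).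
Proof. by move=> c_per i; rewrite /step addrAC c_per c_per -addrA [L%:Z + 1]addrC addrA c_per. Qed.

Lemma number_conserving1_of_step :
  (forall L (c : config R), (0 < L)%N -> periodic L c -> (forall i, inDelta (c i)) ->
     nu1 L (step h c) = nu1 L c) ->
  number_conserving1 R h.
Proof.
move=> step_cons L L_gt0 c c_per c_in t; rewrite iterS.
have iter_ok n : periodic L (iter n (step h) c) /\ (forall i, inDelta (iter n (step h) c i)).
  by elim: n => [|n [per_n in_n]] //=; split; [exact: step_periodic | exact: step_inDelta].
by have [] := iter_ok t; apply: step_cons.
Qed.

Lemma nu1_periodic L (c : config R) : periodic L c -> nu1 L c = \sum_(0 <= i < L) c i ord0.
Proof.
move=> c_per; case: L c_per => [|L] c_per; first by rewrite /nu1 !big_geq.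
rewrite /nu1 big_nat_recr //= [RHS]big_ltn // addrC; congr (_ + _).
by have := c_per 0; rewrite add0r => ->.
Qed.

Section Flux.
Variable J : 'I_3 -> 'I_3 -> R.
Hypothesis hJ : forall j k l, (h (j, k, l) == e1)%:R = (k == e1)%:R + J j k - J k l.

Definition flux (x y : state R) : R := \sum_(j < 3) \sum_(k < 3) J j k * x j * y k.

Lemma localf_flux (x y z : state R) :
  \sum_(j < 3) x j = 1 -> \sum_(l < 3) z l = 1 ->
  localf h x y z e1 = y e1 + flux x y - flux y z.
Proof.
move=> sx sz.
transitivity (y e1 * (\sum_(j < 3) x j) * (\sum_(l < 3) z l)
              + flux x y * (\sum_(l < 3) z l) - (\sum_(j < 3) x j) * flux y z);
  last by rewrite sx sz !mulr1 mul1r.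
by rewrite /localf /flux !sum_ord3 !hJ /=; ring.
Qed.

Lemma nu1_step_flux L (c : config R) :
  periodic L c -> (forall i, inDelta (c i)) -> nu1 L (step h c) = nu1 L c.
Proof.
move=> c_per c_in.
pose F (n : nat) := flux (c n) (c n.+1).
have stepE n : step h c n.+1 ord0 = c n.+1 ord0 + (F n - F n.+1).
  have predE : n.+1%:Z - 1 = n by rewrite -addn1 PoszD addrK.
  have succE : n.+1%:Z + 1 = n.+2%:Z by rewrite -[n.+2]addn1 PoszD.
  rewrite /step localf_flux ?predE ?succE ?addrA //.
  - by case: (c_in n).
  - by case: (c_in n.+2).
have F_per : F L = F 0%N.
  by rewrite /F -[Posz L]add0r c_per -[Posz L.+1]/(Posz (1 + L)) PoszD c_per.
have telescope : \sum_(0 <= i < L) (F i - F i.+1) = 0.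
  by under eq_bigr do rewrite -opprB; rewrite sumrN telescope_sumr // F_per subrr oppr0.
rewrite /nu1 !big_add1 /=; under eq_bigr do rewrite stepE.
by rewrite big_split /= telescope addr0.
Qed.

End Flux.

Definition cyclic_word (w : seq 'I_3) (i : int) : 'I_3 := nth e1 w `|(i %% (size w)%:Z)%Z|.

Definition cyclic_windows (w : seq 'I_3) : seq triple :=
  [seq (cyclic_word w (i%:Z - 1), cyclic_word w i, cyclic_word w (i%:Z + 1))
  | i : nat <- iota 0 (size w)].

Lemma cyclic_word_cells w : [seq cyclic_word w i | i : nat <- iota 0 (size w)] = w.
Proof.
rewrite -[RHS](mkseq_nth e1) /mkseq; apply/eq_in_map => i; rewrite mem_iota add0n => /andP[_ i_lt].
by rewrite /cyclic_word modz_nat /= modn_small.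
Qed.

Lemma count_cyclic_windows w :
  number_conserving1 R h -> (0 < size w)%N ->
  count (e1_indicator h) (cyclic_windows w) = count_mem e1 w.
Proof.
move=> h_cons w_gt0.
pose c : config R := fun i => basis (cyclic_word w i).
have c_per : periodic (size w) c by move=> i; rewrite /c /cyclic_word modzDr.
have := h_cons _ w_gt0 c c_per (fun i => basis_inDelta _) 0%N.
rewrite /= !nu1_periodic //; last exact: step_periodic.
under eq_bigr do rewrite /step /c localf_basis /basis.
under [RHS]eq_bigr do rewrite /basis.
move=> /eqP; rewrite -!natr_sum eqr_nat => /eqP sums_eq.
transitivity (count_mem e1 [seq cyclic_word w i | i : nat <- iota 0 (size w)]).
  rewrite -!sumn_count -!map_comp !sumnE !big_map.
  by move: sums_eq; rewrite /index_iota subn0.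
by rewrite cyclic_word_cells.
Qed.

Lemma flux_identity_conserving : flux_identity (e1_indicator h) -> number_conserving1 R h.
Proof.
move=> /flux_identityP h_id; apply: number_conserving1_of_step => L c _ c_per c_in.
pose a := e1_indicator h.
pose J x y : R := (a (x, y, e1) + a (y, e1, e1))%:R - (y == e1)%:R.
apply: (nu1_step_flux (J := J)) => // j k l.
have /(congr1 (fun n => n%:R : R)) := h_id j k l.
by rewrite !natrD /J /a /e1_indicator => ?; lra.
Qed.

Lemma conserving_flux_identity : number_conserving1 R h -> flux_identity (e1_indicator h).
Proof.
move=> h_cons; apply/flux_identityP => x y z.
have windows5 : cyclic_windows [:: x; y; z; e1; e1] =
                 [:: (e1, x, y); (x, y, z); (y, z, e1); (z, e1, e1); (e1, e1, x)] by [].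
have windows4 : cyclic_windows [:: x; y; e1; e1] =
                 [:: (e1, x, y); (x, y, e1); (y, e1, e1); (e1, e1, x)] by [].
have := count_cyclic_windows (w := [:: x; y; z; e1; e1]) h_cons isT.
have := count_cyclic_windows (w := [:: x; y; e1; e1]) h_cons isT.
rewrite windows5 windows4 /= => four five.
by lia.
Qed.

End Dynamics.

Definition slice (a : triple -> bool) : seq bool := [seq a (x, y, e1) | x <- ords3, y <- ords3].

(* The identity solved for a (x, y, z); the truncated subtraction is exact when it holds. *)
Definition from_slice (s : seq bool) (t : triple) : bool :=
  let b (x y : 'I_3) := nth false s (x * 3 + y) in
  let: (x, y, z) := t in (b x y + b y e1 + (z == e1)) - (b y z + b z e1) == 1.

Lemma nth_slice (a : triple -> bool) (x y : 'I_3) : nth false (slice a) (x * 3 + y) = a (x, y, e1).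
Proof. by elim/ord3_cases: x; elim/ord3_cases: y. Qed.

Lemma from_slice_flux (a : triple -> bool) : flux_identity a -> from_slice (slice a) =1 a.
Proof.
move=> /flux_identityP a_id [[x y] z].
by rewrite /from_slice !nth_slice -a_id -addnA addnK; case: (a _).
Qed.

Fixpoint bool_seqs (n : nat) : seq (seq bool) :=
  if n is n'.+1 then [seq b :: s | b <- [:: false; true], s <- bool_seqs n'] else [:: [::]].

Lemma mem_bool_seqs s : s \in bool_seqs (size s).
Proof.
elim: s => [|b s IHs] //=; rewrite mem_cat.
by case: b; apply/orP; [right; rewrite cats0 | left]; exact: (map_f _ IHs).
Qed.

Lemma flux_identity_solutions :
  all (fun s => flux_identity (from_slice s) ==>
                ([seq nat_of_bool (from_slice s t) | t <- triples] \in conserving_avecs))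
      (bool_seqs 9).
Proof. by rewrite /triples enum_ord3; vm_compute. Qed.

Lemma avec_flux_identity (h : rule) :
  flux_identity (e1_indicator h) -> avec h \in conserving_avecs.
Proof.
move=> h_id; have := allP flux_identity_solutions _ (mem_bool_seqs (slice (e1_indicator h))).
by rewrite (funext (from_slice_flux h_id)) h_id.
Qed.

Definition e1_pattern (v : seq nat) (t : triple) : bool := nth 0 v (index t triples) == 1.

Lemma e1_patternK :
  all (fun v => [seq nat_of_bool (e1_pattern v t) | t <- triples] == v) conserving_avecs.
Proof. by rewrite /e1_pattern /triples enum_ord3; vm_compute. Qed.

Lemma avec_eq_pattern (h : rule) v : v \in conserving_avecs ->
  (avec h == v) = [forall t, e1_indicator h t == e1_pattern v t].
Proof.
move=> v_in; have /eqP {1}<- := allP e1_patternK v v_in.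
apply/eqP/forallP => [/eq_in_map h_v t | h_v].
  move: (h_v t (mem_triples t)); rewrite /e1_indicator.
  by case: (h t == e1); case: (e1_pattern v t).
by apply/eq_in_map => t _; have /eqP <- := h_v t.
Qed.

Lemma e1_patterns_flux_identity : all (fun v => flux_identity (e1_pattern v)) conserving_avecs.
Proof. by rewrite /e1_pattern /triples enum_ord3; vm_compute. Qed.

Lemma flux_identity_avec (h : rule) :
  avec h \in conserving_avecs -> flux_identity (e1_indicator h).
Proof.
move=> h_in; have := allP e1_patterns_flux_identity _ h_in.
have /forallP h_pat : [forall t, e1_indicator h t == e1_pattern (avec h) t].
  by rewrite -avec_eq_pattern.
by rewrite (funext (fun t => eqP (h_pat t))).
Qed.

Lemma uniq_triples : uniq triples.
Proof. by rewrite /triples enum_ord3. Qed.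

Lemma card_triple (P : pred triple) : #|P| = count P triples.
Proof.
rewrite cardE -size_filter; apply/perm_size/uniq_perm.
- exact: enum_uniq.
- exact: filter_uniq uniq_triples.
- by move=> t; rewrite mem_enum mem_filter mem_triples andbT.
Qed.

Lemma card_ffun_ord0_pattern (T : finType) n (B : pred T) :
  #|[pred f : {ffun T -> 'I_n.+1} | [forall t, (f t == ord0) == B t]]| = n ^ #|[pred t | ~~ B t]|.
Proof.
pose F t : pred 'I_n.+1 := if B t then pred1 ord0 else predC1 ord0.
have -> : #|[pred f : {ffun T -> 'I_n.+1} | [forall t, (f t == ord0) == B t]]| =
           #|(family F : simpl_pred {ffun T -> 'I_n.+1})|.
  apply: eq_card => f; rewrite !inE; apply/forallP/familyP => f_pat t; have := f_pat t;
  by rewrite /F; case: (B t); rewrite !inE ?eqb_id ?eqbF_neg.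
rewrite card_family foldrE big_map big_enum /= -prod_nat_const [RHS]big_mkcond /=.
by apply: eq_bigr => t _; rewrite /F !inE; case: (B t); rewrite ?card1 // cardC1 card_ord.
Qed.

Lemma card_preim_seq (T : finType) (U : eqType) (f : T -> U) (s : seq U) : uniq s ->
  #|[pred x | f x \in s]| = \sum_(u <- s) #|[pred x | f x == u]|.
Proof.
elim: s => [_|u s IHs /= /andP[u_notin s_uniq]]; first by rewrite big_nil; apply: eq_card0.
rewrite big_cons -IHs // -(cardID [pred x | f x == u]); congr (_ + _); apply: eq_card => x.
  by rewrite !inE; case: eqP => [->|]; rewrite ?mem_head ?andbF.
by rewrite !inE; case: eqP => [->|] /=; rewrite ?(negbTE u_notin).
Qed.

Lemma e1_patterns_count :
  all (fun v => count (fun t => ~~ e1_pattern v t) triples == 18) conserving_avecs.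
Proof. by rewrite /e1_pattern /triples enum_ord3; vm_compute. Qed.

Lemma card_avec_eq v : v \in conserving_avecs -> #|[pred h : rule | avec h == v]| = 2 ^ 18.
Proof.
move=> v_in; have /eqP zeros := allP e1_patterns_count v v_in.
rewrite -zeros -card_triple -card_ffun_ord0_pattern; apply: eq_card => h.
by rewrite !inE avec_eq_pattern.
Qed.

Theorem mainTheorem3 (R : realType) :
  (forall h : rule, number_conserving1 R h <-> avec h \in conserving_avecs) /\
  #|[pred h : rule | `[< number_conserving1 R h >]]| = (9 * 2 ^ 18)%N.
Proof.
have conservingE (h : rule) : number_conserving1 R h <-> avec h \in conserving_avecs.
  split=> [/conserving_flux_identity/avec_flux_identity //|].
  by move=> /flux_identity_avec/flux_identity_conserving.
split=> //; rewrite (eq_card (B := [pred h : rule | avec h \in conserving_avecs])); last first.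
  by move=> h; rewrite inE (asbool_equiv_eq (conservingE h)) asboolb.
rewrite (card_preim_seq avec) // (eq_big_seq (fun=> 2 ^ 18)) => [|v /card_avec_eq //].
by rewrite big_const_seq count_predT iter_addn_0 mulnC.
Qed.
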